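(* Let $X$ be a second countable locally compact Abelian group containing no nonzero compact subgroups. Let $\xi_1,\xi_2$ be independent identically distributed random variables with values in $X$ and a symmetric distribution $\mu$. Let $\alpha$ be a random variable with a Bernoulli distribution taking the values $0$ and $1$ with probability $\frac12$ each, independent of $(\xi_1,\xi_2)$. Then the following are equivalent: (i) the linear forms $2\alpha\xi_1$ and $\xi_1+\xi_2$ are identically distributed; (ii) there is $x_0\in X$ such that $\mu=\frac12\left(E_{x_0}+E_{-x_0}\right)$.
   Context: A distribution is symmetric if $\mu(B)=\mu(-B)$ for all Borel $B$. $E_x$ denotes the point mass at $x$. *)

From HB Require Import structures.
From mathcomp Require Import all_boot all_order all_algebra.
From mathcomp Require Import all_classical all_reals all_analysis.
Set Implicit Arguments. Unset Strict Implicit. Unset Printing Implicit Defensive.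
Import Order.TTheory GRing.Theory Num.Theory.
Local Open Scope classical_set_scope.
Local Open Scope ring_scope.

Definition borel_display {T} : set (set T) -> measure_display.
Proof. exact. Qed.

Definition borelType (X : topologicalZmodType) : Type := X.

Section borel_instance.
Variable X : topologicalZmodType.
HB.instance Definition _ := GRing.Zmodule.on (borelType X).
HB.instance Definition _ := Topological.on (borelType X).
HB.instance Definition _ := isPointed.Build (borelType X) 0.
Let G := [set U : set X | open U].
Lemma borel_sigmaC (A : set X) : <<s G >> A -> <<s G >> (~` A).
Proof. by move=> sGA; rewrite -setTD; exact: sigma_algebraCD. Qed.
HB.instance Definition _ := @isMeasurable.Build (borel_display G)
  (borelType X) <<s G >> (@sigma_algebra0 _ setT G) (@borel_sigmaC)
  (@sigma_algebra_bigcup _ setT G).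
End borel_instance.

Definition is_subgroup (X : zmodType) (K : set X) : Prop :=
  K 0 /\ (forall x y, K x -> K y -> K (x - y)).

Definition no_nonzero_compact_subgroup (X : topologicalZmodType) : Prop :=
  forall K : set X, is_subgroup K -> compact K -> K = [set 0].

Definition symmetric_measure (X : topologicalZmodType) (R : realType)
  (mu : set (borelType X) -> \bar R) : Prop :=
  forall B : set (borelType X), measurable B -> mu B = mu [set - x | x in B].

Definition independent_rv d0 d1 d2 (Omega : measurableType d0) (R : realType)
  (P : probability Omega R) (T1 : measurableType d1) (T2 : measurableType d2)
  (Y1 : Omega -> T1) (Y2 : Omega -> T2) : Prop :=
  forall (A : set T1) (B : set T2), measurable A -> measurable B ->
    P (Y1 @^-1` A `&` Y2 @^-1` B) = (P (Y1 @^-1` A) * P (Y2 @^-1` B))%E.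

Definition has_distribution d0 d (Omega : measurableType d0) (R : realType)
  (P : probability Omega R) (T : measurableType d) (Y : Omega -> T)
  (mu : set T -> \bar R) : Prop :=
  forall A : set T, measurable A -> P (Y @^-1` A) = mu A.

Definition identically_distributed d0 d (Omega : measurableType d0)
  (R : realType) (P : probability Omega R) (T : measurableType d)
  (Y1 Y2 : Omega -> T) : Prop :=
  forall A : set T, measurable A -> P (Y1 @^-1` A) = P (Y2 @^-1` A).

From HB Require Import structures.
From mathcomp Require Import all_boot all_order all_algebra.
From mathcomp Require Import all_classical all_reals all_analysis.
From mathcomp Require Import ring lra.
Import Order.TTheory GRing.Theory Num.Theory.
Local Open Scope classical_set_scope.
Local Open Scope ring_scope.
Set Implicit Arguments. Unset Strict Implicit. Unset Printing Implicit Defensive.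

(* (ii) -> (i): the triple (alpha, xi1, xi2) is uniformly distributed on the
   eight points {0,1} x {x0,-x0}^2, and counting shows that both 2 alpha xi1
   and xi1 + xi2 take the values 0, 2 x0, -2 x0 with probabilities 1/2, 1/4,
   1/4.
   (i) -> (ii): let p = mu {0}.  On one hand P(xi1 + xi2 = 0) = P(2 alpha xi1 = 0)
   >= 1/2 + p/2.  On the other hand, for every finite Borel cover (B_i) of X,
   xi1 + xi2 = 0 and xi1 in B_i force xi2 in -B_i, so by independence and
   symmetry P(xi1 + xi2 = 0) <= sum_i mu(B_i)^2.  Since X has no element of
   order 2, a countable base of the Hausdorff space X yields a Borel set H with
   X = {0} + H + (-H) (disjoint).  The cover {0}, H, -H gives p in {0, 1}; when
   p = 0, the covers {0}, A, -A, H \ A, -(H \ A) show that mu takes only the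
   values 0 and 1/2 on Borel subsets A of H, so by second countability mu
   restricted to H is a point mass 1/2 E_x0, and symmetry gives the other half. *)

Lemma measurable_preimageT d d' (T : measurableType d) (U : measurableType d')
    (f : T -> U) (A : set U) :
  measurable_fun setT f -> measurable A -> measurable (f @^-1` A).
Proof. by move=> mf mA; rewrite -[f @^-1` A]setTI; exact: mf. Qed.

Section topology.
Variable X : topologicalZmodType.

Lemma second_countable_nat_base : @second_countable X ->
  exists b : nat -> set X, (forall n, open (b n)) /\
    (forall x A, nbhs x A -> exists n, b n x /\ b n `<=` A).
Proof.
case=> B cB [Bo Bb]; have /pcard_surjP [g gs] := cB.
exists (fun n => if `[< B (g n) >] then g n else set0); split.
  by move=> n; case: asboolP => ?; [exact: Bo | exact: open0].
move=> x A /Bb [U [BU Ux] UA]; have [n _ gn] := gs U BU.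
by exists n; case: asboolP => [_ | []]; rewrite gn.
Qed.

Lemma nocompact_eqNr : no_nonzero_compact_subgroup X ->
  forall x : X, (- x == x) = (x == 0).
Proof.
move=> nc x; apply/eqP/eqP => [Nx | ->]; last exact: oppr0.
have K : is_subgroup [set 0; x].
  split=> [|u v [] -> [] ->]; rewrite ?subrr ?subr0 ?sub0r ?Nx;
    by [left | right].
have := nc _ K (finite_compact (finite_set2 _ _)).
by move/(congr1 (fun S => S x)); rewrite /= => <-; right.
Qed.

Lemma oppr_open (U : set X) : open U -> open (-%R @^-1` U).
Proof. by move=> oU; apply: open_comp => // z _; exact: opp_continuous. Qed.

Section nat_base.
Variable b : nat -> set X.
Hypothesis b_open : forall n, open (b n).
Hypothesis base : forall x A, nbhs x A -> exists n, b n x /\ b n `<=` A.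

Lemma base_separation : hausdorff_space X -> forall x y : X, x != y ->
  exists n m, [/\ b n x, b m y & b n `&` b m = set0].
Proof.
rewrite open_hausdorff => hX x y /hX [[U V] /= [Ux Vy] [oU oV /eqP UV]].
rewrite !inE in Ux Vy.
have [n [bnx bnU]] := base (open_nbhs_nbhs (conj oU Ux)).
have [m [bmy bmV]] := base (open_nbhs_nbhs (conj oV Vy)).
exists n, m; split => //; apply/seteqP; split => // z [/bnU Uz /bmV Vz].
by rewrite -UV.
Qed.

Lemma base_antisymmetric : hausdorff_space X -> no_nonzero_compact_subgroup X ->
  forall x : X, x != 0 ->
  exists n, b n x /\ b n `&` -%R @^-1` b n = set0.
Proof.
move=> hX nc x x0; have xNx : x != - x by rewrite eq_sym nocompact_eqNr.
have [n [m [bnx bmNx bnm]]] := base_separation hX xNx.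
have [k [bkx bkW]] : exists k, b k x /\ b k `<=` b n `&` -%R @^-1` b m.
  apply: base; apply: open_nbhs_nbhs; split; last by split.
  by apply: openI => //; apply: oppr_open.
exists k; split => //; apply/seteqP; split => // y [/bkW [bny _] /bkW [_ /= bmy]].
have : (b n `&` b m) y by split; rewrite // -[y]opprK.
by rewrite bnm.
Qed.
End nat_base.
End topology.

Section half_set.
Variables (V : zmodType) (c : nat -> set V).

(* Whichever of [x] and [- x] first enters the sequence [c] lies in
   [half_set c]. *)
Definition half_set : set V :=
  \bigcup_n (c n `\` \bigcup_(k in `I_n) (c k `|` -%R @^-1` c k)).

Lemma half_setN : (forall n, c n `&` -%R @^-1` c n = set0) ->
  forall x, half_set x -> ~ half_set (- x).
Proof.
move=> c_anti x [n _ [cnx nx]] [m _ [cmx nmx]].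
have [nm|mn|nm] := ltngtP n m.
- by apply: nmx; exists n => //; right; rewrite /= opprK.
- by apply: nx; exists m => //; right.
- have : (c n `&` -%R @^-1` c n) x by split; rewrite // nm.
  by rewrite c_anti.
Qed.

Lemma half_set_cover : (forall x, x != 0 -> exists n, c n x) ->
  forall x, x != 0 -> half_set x \/ half_set (- x).
Proof.
move=> c_cover x /c_cover [n0 cx].
have ex : exists n, `[< c n x \/ c n (- x) >] by exists n0; apply/asboolP; left.
case: (ex_minnP ex) => n /asboolP cn nmin.
have out k : (k < n)%N -> ~ (c k x \/ c k (- x)).
  by move=> kn /asboolP /nmin; rewrite leqNgt kn.
case: cn => cnx; [left | right]; exists n => //; split => // -[k /= kn].
- by case=> ckx; apply: (out k kn); [left | right].
- by rewrite opprK; case=> ckx; apply: (out k kn); [right | left].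
Qed.

End half_set.

Section borel_measurability.
Variable X : topologicalZmodType.
Implicit Types U : set X.

Lemma borel_open_measurable U : open U -> measurable (U : set (borelType X)).
Proof. by move=> oU; apply: sub_sigma_algebra. Qed.

Lemma borel_set1_measurable : hausdorff_space X ->
  forall x : X, measurable ([set x] : set (borelType X)).
Proof.
move=> hX x; rewrite -[ [set x] ]setCK; apply: measurableC.
apply: borel_open_measurable; rewrite openC.
exact: accessible_closed_set1 (hausdorff_accessible hX) x.
Qed.

Lemma measurable_fun_borel d (T : measurableType d) (f : T -> borelType X) :
  (forall U, open U -> measurable (f @^-1` U)) -> measurable_fun setT f.
Proof.
move=> fU; apply: (@measurability _ _ _ _ setT f (@open X)) => //.
by move=> _ [U oU <-]; rewrite setTI; exact: fU.
Qed.

Lemma borel_measurableN (B : set (borelType X)) :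
  measurable B -> measurable (-%R @^-1` B).
Proof.
have mN : measurable_fun setT (-%R : borelType X -> borelType X).
  apply: measurable_fun_borel => U oU.
  by apply: borel_open_measurable; apply: oppr_open.
exact: measurable_preimageT mN.
Qed.

Lemma borel_half_set : hausdorff_space X -> no_nonzero_compact_subgroup X ->
  @second_countable X ->
  exists H : set (borelType X), [/\ measurable H,
    forall x, H x -> ~ H (- x) & forall x, x != 0 -> H x \/ H (- x)].
Proof.
move=> hX nc /second_countable_nat_base [b [b_open base]].
pose c n := if `[< b n `&` -%R @^-1` b n = set0 >] then b n else set0.
have c_open n : open (c n).
  by rewrite /c; case: asboolP => _; [exact: b_open | exact: open0].
have c_anti n : c n `&` -%R @^-1` c n = set0.
  by rewrite /c; case: asboolP => // _; rewrite set0I.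
have c_cover x : x != 0 -> exists n, c n x.
  move=> /(base_antisymmetric b_open base hX nc) [n [bnx bn]].
  by exists n; rewrite /c; case: asboolP.
exists (half_set c); split; [|exact: half_setN|exact: half_set_cover].
apply: bigcupT_measurable => n; apply: measurableD.
  exact: borel_open_measurable.
apply: bigcup_measurable => k _; apply: borel_open_measurable.
by apply: openU => //; apply: oppr_open.
Qed.

Hypothesis sX : @second_countable X.

Lemma borel_measurable_funD d (T : measurableType d) (f g : T -> borelType X) :
  measurable_fun setT f -> measurable_fun setT g ->
  measurable_fun setT (fun w => f w + g w).
Proof.
move=> mf mg; have [b [b_open base]] := second_countable_nat_base sX.
apply: measurable_fun_borel => U oU.
pose S n m := if `[< forall u v, b n u -> b m v -> U (u + v) >]
  then f @^-1` b n `&` g @^-1` b m else set0.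
suff -> : (fun w => f w + g w) @^-1` U = \bigcup_n \bigcup_m S n m.
  apply: bigcupT_measurable => n; apply: bigcupT_measurable => m.
  rewrite /S; case: asboolP => _; last exact: measurable0.
  by apply: measurableI; apply: measurable_preimageT => //;
    exact: borel_open_measurable.
apply/seteqP; split => [w /= Uw | w [n _ [m _]]]; last first.
  by rewrite /S; case: asboolP => // nmU [/= fw gw]; exact: nmU.
have [[Q1 Q2] /= [Q1f Q2g] QU] :=
  @add_continuous X (f w, g w) _ (open_nbhs_nbhs (conj oU Uw)).
have [n [bnf bnQ]] := base _ _ Q1f; have [m [bmg bmQ]] := base _ _ Q2g.
exists n => //; exists m => //; rewrite /S; case: asboolP => [_ | []]; first by [].
by move=> u v bu bv; apply: (QU (u, v)); split; [exact: bnQ | exact: bmQ].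
Qed.

Lemma borel_measurable_funMn d (T : measurableType d) (f : T -> borelType X)
    (k : T -> nat) :
  measurable_fun setT f -> measurable_fun setT k ->
  measurable_fun setT (fun w => f w *+ k w).
Proof.
move=> mf mk; have mfn n : measurable_fun setT (fun w => f w *+ n).
  elim: n => [|n IH]; first exact: measurable_cst.
  have -> : (fun w => f w *+ n.+1) = (fun w => f w + f w *+ n).
    by apply/funext => w; rewrite mulrS.
  exact: borel_measurable_funD.
apply: measurable_fun_borel => U oU.
have -> : (fun w => f w *+ k w) @^-1` U =
    \bigcup_n (k @^-1` [set n] `&` (fun w => f w *+ n) @^-1` U).
  by apply/seteqP; split => [w /= Uw | w [n _ [/= -> //]]]; exists (k w).
apply: bigcupT_measurable => n.
by apply: measurableI; apply: measurable_preimageT => //;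
  exact: borel_open_measurable.
Qed.

End borel_measurability.

Section probability_of_events.
Context d (T : measurableType d) (R : realType) (P : probability T R).
Implicit Types A B S : set T.

Definition pr A : R := fine (P A).

Lemma prE A : measurable A -> P A = (pr A)%:E.
Proof. by move=> mA; rewrite /pr fineK // fin_num_measure. Qed.

Lemma pr_ge0 A : 0 <= pr A.
Proof. by rewrite /pr fine_ge0 // measure_ge0. Qed.

Lemma pr0 : pr set0 = 0.
Proof. by rewrite /pr measure0. Qed.

Lemma prT : pr setT = 1.
Proof. by rewrite /pr probability_setT. Qed.

Lemma prU A B : measurable A -> measurable B -> A `&` B = set0 ->
  pr (A `|` B) = pr A + pr B.
Proof.
move=> mA mB AB; apply/eqP; rewrite -eqe -prE ?EFinD -?prE //.
  by rewrite measureU.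
exact: measurableU.
Qed.

Lemma prU2 A B : measurable A -> measurable B -> pr (A `|` B) <= pr A + pr B.
Proof.
move=> mA mB; rewrite -lee_fin -prE ?EFinD -?prE //; last exact: measurableU.
exact: measureU2.
Qed.

Lemma pr_le A B : measurable A -> measurable B -> A `<=` B -> pr A <= pr B.
Proof.
by move=> mA mB AB; rewrite -lee_fin -!prE //; apply: le_measure; rewrite ?inE.
Qed.

Lemma prC A : measurable A -> pr (~` A) = 1 - pr A.
Proof.
move=> mA; apply/eqP; rewrite -eqe -prE ?EFinB -?prE //; last exact: measurableC.
by rewrite probability_setC.
Qed.

Lemma pr_setI_full S G : measurable S -> measurable G -> pr G = 1 ->
  pr (S `&` G) = pr S.
Proof.
move=> mS mG G1; have mSG : measurable (S `\` G) by apply: measurableD.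
have : pr (S `\` G) <= pr (~` G) by apply: pr_le => //; exact: measurableC.
rewrite prC // G1 subrr => SG0.
rewrite -{2}(setUIDK S G) prU //; last 2 first.
- exact: measurableI.
- by apply/seteqP; split => // w [[_ ?] [_ ?]].
by have := pr_ge0 (S `\` G); lra.
Qed.

Lemma pr_null_cover (F : nat -> set T) A : (forall n, measurable (F n)) ->
  (forall n, pr (F n) = 0) -> measurable A -> A `<=` \bigcup_n F n -> pr A = 0.
Proof.
move=> mF F0 mA AF; apply/eqP; rewrite eq_le pr_ge0 andbT -lee_fin -prE //.
apply: le_trans (measure_sigma_subadditive _ mF mA AF) _.
by rewrite eseries0 // => n _ _ /=; rewrite prE // F0.
Qed.

Lemma pr_independent d1 d2 (T1 : measurableType d1) (T2 : measurableType d2)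
    (Y1 : T -> T1) (Y2 : T -> T2) (A1 : set T1) (A2 : set T2) :
  independent_rv P Y1 Y2 -> measurable A1 -> measurable A2 ->
  measurable (Y1 @^-1` A1) -> measurable (Y2 @^-1` A2) ->
  pr (Y1 @^-1` A1 `&` Y2 @^-1` A2) = pr (Y1 @^-1` A1) * pr (Y2 @^-1` A2).
Proof.
by move=> iY mA1 mA2 mY1 mY2; rewrite /pr iY // fineM // fin_num_measure.
Qed.

Section finite_support.
Variables (U : eqType) (Z : T -> U).
Hypothesis mZ1 : forall z, measurable (Z @^-1` [set z]).

Lemma pr_setI_mem_seq (s : seq U) S : uniq s -> measurable S ->
  measurable [set w | Z w \in s] /\
  pr (S `&` [set w | Z w \in s]) = \sum_(z <- s) pr (S `&` Z @^-1` [set z]).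
Proof.
move=> + mS; elim: s => [_ | z s IH /= /andP[zs /IH[ms prs]]].
  have -> : [set w | Z w \in [::]] = set0 by apply/seteqP; split.
  by rewrite setI0 big_nil pr0.
have -> : [set w | Z w \in z :: s] = Z @^-1` [set z] `|` [set w | Z w \in s].
  apply/seteqP; split => w /=; rewrite in_cons.
    by case/orP => [/eqP|]; [left | right].
  by case=> [-> | ->]; rewrite ?eqxx ?orbT.
split; first exact: measurableU.
rewrite setIUr prU ?big_cons ?prs //; try exact: measurableI.
apply/seteqP; split => // w [[_ /= Zw] [_ /= ws]].
by move: zs; rewrite -Zw ws.
Qed.

Lemma pr_comp_finite_support (V : Type) (f : U -> V) (s : seq U) (A : set V) :
  uniq s -> \sum_(z <- s) pr (Z @^-1` [set z]) = 1 ->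
  measurable ((f \o Z) @^-1` A) ->
  pr ((f \o Z) @^-1` A) = \sum_(z <- s) (f z \in A)%:R * pr (Z @^-1` [set z]).
Proof.
move=> us s1 mA; have [ms prs] := pr_setI_mem_seq us mA.
have s1' : pr [set w | Z w \in s] = 1.
  have [_] := pr_setI_mem_seq us measurableT; rewrite setTI => ->.
  by rewrite -s1; apply: eq_bigr => z _; rewrite setTI.
rewrite -(pr_setI_full mA ms s1') prs.
apply: eq_bigr => z _; have [Az | Az] := boolP (f z \in A).
  rewrite mul1r; congr pr; apply/seteqP; split => [w [] // | w /= Zw].
  by split; rewrite //= Zw -in_setE.
rewrite mul0r -pr0; congr pr; apply/seteqP; split => // w [/= fZw Zw].
by move: Az; rewrite -Zw => /negP; apply; rewrite in_setE.
Qed.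

End finite_support.
End probability_of_events.

Section borel_atom.
Variables (R : realType) (X : topologicalZmodType).
Variable mu : probability (borelType X) R.
Hypotheses (hX : hausdorff_space X) (sX : @second_countable X).
Local Notation pm := (pr mu).

Lemma pr_atom (S : set (borelType X)) : measurable S -> 0 < pm S ->
    (forall A, measurable A -> A `<=` S -> pm A = 0 \/ pm A = pm S) ->
  exists2 x, S x & pm [set x] = pm S.
Proof.
move=> mS S_gt0 S01; have [b [b_open base]] := second_countable_nat_base sX.
have mbS n : measurable (b n `&` S : set (borelType X)).
  by apply: measurableI => //; exact: borel_open_measurable.
pose N n : set (borelType X) :=
  if `[< pm (b n `&` S) = 0 >] then b n `&` S else set0.
have mN n : measurable (N n).
  by rewrite /N; case: asboolP => _; [exact: mbS | exact: measurable0].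
have N0 n : pm (N n) = 0 by rewrite /N; case: asboolP => // _; exact: pr0.
have inN n y : b n y -> S y -> pm (b n `&` S) = 0 -> (\bigcup_n N n) y.
  by move=> bny Sy bnS; exists n => //; rewrite /N; case: asboolP.
(* Discarding the basic sets of [S]-mass zero, a null set, leaves a point all
   of whose basic neighbourhoods carry the full mass of [S]. *)
have [x Sx x_full] : exists2 x, S x & forall n, b n x -> pm (b n `&` S) = pm S.
  apply: contrapT => nx; move: S_gt0; suff -> : pm S = 0 by rewrite ltxx.
  apply: (pr_null_cover mN N0 mS) => y Sy.
  have /existsNP [n /not_implyP [bny bnS]] :
      ~ forall n, b n y -> pm (b n `&` S) = pm S.
    by move=> yfull; apply: nx; exists y.
  by apply: (inN n) => //; case: (S01 _ (mbS n) (@subIsetr _ _ _)).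
have mSx : measurable (S `\` [set x]).
  by apply: measurableD => //; exact: borel_set1_measurable.
(* Another point of [S] has a basic neighbourhood disjoint from one of [x],
   which therefore has [S]-mass zero. *)
have Sx0 : pm (S `\` [set x]) = 0.
  apply: (pr_null_cover mN N0 mSx) => y [Sy /eqP]; rewrite eq_sym => xy.
  have [n [m [bnx bmy bnm]]] := base_separation base hX xy.
  apply: (inN m) => //; have [//|bmS] := S01 _ (mbS m) (@subIsetr _ _ _).
  have : pm ((b n `&` S) `|` (b m `&` S)) <= pm S.
    by apply: pr_le => //; [exact: measurableU | move=> z [[]|[]]].
  rewrite prU // ?(x_full n bnx) ?bmS; first by move: S_gt0; lra.
  by rewrite setIACA bnm set0I.
exists x => //; rewrite -(@setDUK _ [set x] S) ?prU ?Sx0 ?addr0 //.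
- exact: borel_set1_measurable.
- by rewrite setDIK.
- by move=> _ ->.
Qed.

End borel_atom.

Section bernoulli_sum.
Variables (R : realType) (X : topologicalZmodType) (d0 : measure_display)
  (Omega : measurableType d0) (P : probability Omega R)
  (xi1 xi2 : Omega -> borelType X) (alpha : Omega -> nat)
  (mu : probability (borelType X) R).
Hypotheses (hX : hausdorff_space X) (sX : @second_countable X)
  (nc : no_nonzero_compact_subgroup X)
  (m1 : measurable_fun setT xi1) (m2 : measurable_fun setT xi2)
  (ma : measurable_fun setT alpha)
  (d1 : has_distribution P xi1 mu) (d2 : has_distribution P xi2 mu)
  (ind12 : independent_rv P xi1 xi2) (sym : symmetric_measure mu)
  (pa0 : P (alpha @^-1` [set 0%N]) = (2^-1)%:E)
  (pa1 : P (alpha @^-1` [set 1%N]) = (2^-1)%:E)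
  (inda : independent_rv P alpha (fun w => (xi1 w, xi2 w))).

Local Notation pm := (pr mu).
Local Notation pP := (pr P).
Let Y1 w := xi1 w *+ (2 * alpha w)%N.
Let Y2 w := xi1 w + xi2 w.
Let E := Y2 @^-1` [set 0].
Let set1_measurable := borel_set1_measurable hX.

Lemma pr_two_pointE (x0 : borelType X) :
  (forall A : set (borelType X), measurable A ->
    pm A = 2^-1 * ((x0 \in A)%:R + (- x0 \in A)%:R)) <->
  (forall A : set (borelType X), measurable A ->
    mu A = ((2^-1)%:E * (@dirac _ _ x0 R A + @dirac _ _ (- x0)%R R A))%E).
Proof.
by split=> muA A mA; [rewrite prE // muA // | rewrite /pr muA //];
  rewrite !diracE -EFinD -EFinM.
Qed.

Lemma measurable_Y1 : measurable_fun setT Y1.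
Proof. by apply: borel_measurable_funMn => //; exact: measurableT_comp. Qed.

Lemma measurable_Y2 : measurable_fun setT Y2.
Proof. exact: borel_measurable_funD. Qed.

Lemma pm_oppr (B : set (borelType X)) : measurable B -> pm (-%R @^-1` B) = pm B.
Proof.
move=> mB; rewrite /pr (sym mB); congr (fine (mu _)).
apply/seteqP; split => [y /= By | _ [y By <-] /=]; last by rewrite opprK.
by exists (- y); rewrite ?opprK.
Qed.

Lemma pr_xi12 (A B : set (borelType X)) : measurable A -> measurable B ->
  pP (xi1 @^-1` A `&` xi2 @^-1` B) = pm A * pm B.
Proof.
move=> mA mB; rewrite pr_independent //; try exact: measurable_preimageT.
by congr (fine _ * fine _); [exact: d1 | exact: d2].
Qed.

Lemma pr_alpha_xi12 k A B : measurable A -> measurable B ->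
  pP (alpha @^-1` [set k] `&` (xi1 @^-1` A `&` xi2 @^-1` B)) =
  pP (alpha @^-1` [set k]) * pm A * pm B.
Proof.
move=> mA mB; have mAB : measurable (xi1 @^-1` A `&` xi2 @^-1` B).
  by apply: measurableI; apply: measurable_preimageT.
rewrite (pr_independent (Y2 := fun w => (xi1 w, xi2 w)) (A2 := A `*` B)) //;
  last 2 first.
- exact: measurableX.
- exact: measurable_preimageT.
rewrite -mulrA; congr (_ * _).
exact: pr_xi12.
Qed.

Lemma measurable_E : measurable E.
Proof. exact: measurable_preimageT measurable_Y2 (set1_measurable 0). Qed.

(* On [xi1 + xi2 = 0], [xi1 \in B] forces [xi2 \in -B], and [mu (-B) = mu B]. *)
Lemma pr_sum_eq0_le (s : seq (set (borelType X))) :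
  (forall B, B \in s -> measurable B) -> \big[setU/set0]_(B <- s) B = setT ->
  pP E <= \sum_(B <- s) pm B ^+ 2.
Proof.
move=> ms sT; rewrite -[E]setIT -(preimage_setT xi1) -sT.
elim: s ms {sT} => [_ | B s IH ms].
  by rewrite !big_nil preimage_set0 setI0 pr0.
have mB : measurable B by apply: ms; rewrite mem_head.
have ms' C : C \in s -> measurable C.
  by move=> Cs; apply: ms; rewrite in_cons Cs orbT.
have {}IH := IH ms'.
rewrite !big_cons preimage_setU setIUr; apply: le_trans (prU2 _ _ _) _.
- by apply: measurableI measurable_E _; exact: measurable_preimageT.
- apply: measurableI measurable_E _; apply: measurable_preimageT => //.
  by rewrite big_seq; apply: bigsetU_measurable.
apply: lerD IH; rewrite expr2 -{2}(pm_oppr mB) -pr_xi12 //; last first.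
  exact: borel_measurableN.
apply: pr_le.
- by apply: measurableI measurable_E _; exact: measurable_preimageT.
- apply: measurableI; apply: measurable_preimageT => //.
  exact: borel_measurableN.
by move=> w [/eqP]; rewrite addr_eq0 => /eqP xiN xB; split; rewrite //= -xiN.
Qed.

Lemma pr_alpha0 : pP (alpha @^-1` [set 0%N]) = 2^-1.
Proof. by rewrite /pr pa0. Qed.

Lemma pr_alpha1 : pP (alpha @^-1` [set 1%N]) = 2^-1.
Proof. by rewrite /pr pa1. Qed.

Lemma pr_sum_eq0_ge : identically_distributed P Y1 Y2 ->
  2^-1 + 2^-1 * pm [set 0] <= pP E.
Proof.
move=> idd; have -> : pP E = pP (Y1 @^-1` [set 0]) by rewrite /pr idd.
pose C0 := alpha @^-1` [set 0%N].
pose C1 := alpha @^-1` [set 1%N] `&` (xi1 @^-1` [set 0] `&` xi2 @^-1` setT).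
have mC0 : measurable C0 by exact: measurable_preimageT.
have mC1 : measurable C1.
  by apply: measurableI; last apply: measurableI; exact: measurable_preimageT.
have <- : pP C1 = 2^-1 * pm [set 0].
  by rewrite pr_alpha_xi12 // prT mulr1 pr_alpha1.
have <- : pP C0 = 2^-1 by exact: pr_alpha0.
rewrite -prU //; last first.
  by apply/seteqP; split => // w [/= a0 [/= a1]]; move: a1; rewrite a0.
apply: pr_le; first exact: measurableU.
  exact: measurable_preimageT measurable_Y1 _.
by move=> w [/= a0 | [/= a1 [x0 _]]]; rewrite /Y1 ?a0 ?x0 ?muln0 ?mulr0n ?mul0rn.
Qed.

Let Z w := (alpha w, xi1 w, xi2 w).

Lemma preimage_Z_set1 k x y : Z @^-1` [set (k, x, y)] =
  alpha @^-1` [set k] `&` (xi1 @^-1` [set x] `&` xi2 @^-1` [set y]).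
Proof.
by apply/seteqP; split => w; rewrite /preimage /set1 /= /Z;
  [case=> -> -> -> | move=> [-> [-> ->]]].
Qed.

Lemma measurable_Z_set1 z : measurable (Z @^-1` [set z]).
Proof.
case: z => [[k x] y]; rewrite preimage_Z_set1.
by apply: measurableI; last apply: measurableI; exact: measurable_preimageT.
Qed.

Lemma pr_Z_set1 k x y : pP (Z @^-1` [set (k, x, y)]) =
  pP (alpha @^-1` [set k]) * pm [set x] * pm [set y].
Proof. by rewrite preimage_Z_set1 pr_alpha_xi12. Qed.

Lemma identically_distributed_of_two_point (x0 : borelType X) :
  (forall A : set (borelType X), measurable A ->
    pm A = 2^-1 * ((x0 \in A)%:R + (- x0 \in A)%:R)) ->
  identically_distributed P Y1 Y2.
Proof.
move=> muA A mA; have mY1A := measurable_preimageT measurable_Y1 mA.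
have mY2A := measurable_preimageT measurable_Y2 mA.
rewrite !prE //; congr EFin.
pose f1 (z : nat * borelType X * borelType X) := z.1.2 *+ (2 * z.1.1).
pose f2 (z : nat * borelType X * borelType X) := z.1.2 + z.2.
have law f s := @pr_comp_finite_support _ _ _ P _ Z measurable_Z_set1 _ f s A.
have [x0_eq0 | x0N0] := eqVneq x0 0.
  have mu0 : pm [set 0] = 1 by rewrite muA // x0_eq0 oppr0 mem_set //=; lra.
  pose s : seq (nat * borelType X * borelType X) := [:: (0%N, 0, 0); (1%N, 0, 0)].
  have s1 : \sum_(z <- s) pP (Z @^-1` [set z]) = 1.
    by rewrite !big_cons big_nil !pr_Z_set1 pr_alpha0 pr_alpha1 mu0; lra.
  rewrite (law f1 s) ?(law f2 s) // !big_cons !big_nil /f1 /f2 /=.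
  by rewrite !mul0rn !addr0.
have Nx : - x0 != x0 by rewrite nocompact_eqNr.
have xN : x0 != - x0 by rewrite eq_sym.
have px : pm [set x0] = 2^-1.
  by rewrite (muA _ (set1_measurable x0)) !in_set1 eqxx (negbTE Nx) /=; lra.
have pNx : pm [set - x0] = 2^-1.
  by rewrite (muA _ (set1_measurable _)) !in_set1 eqxx (negbTE xN) /=; lra.
pose s : seq (nat * borelType X * borelType X) :=
  [:: (0%N, x0, x0); (0%N, x0, - x0); (0%N, - x0, x0); (0%N, - x0, - x0);
      (1%N, x0, x0); (1%N, x0, - x0); (1%N, - x0, x0); (1%N, - x0, - x0)].
have us : uniq s.
  by rewrite /= !inE !xpair_eqE !eqxx (negbTE xN) (negbTE Nx) !andbF.
have s1 : \sum_(z <- s) pP (Z @^-1` [set z]) = 1.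
  by rewrite !big_cons big_nil !pr_Z_set1 pr_alpha0 pr_alpha1 px pNx; lra.
rewrite (law f1 s) ?(law f2 s) // !big_cons !big_nil /f1 /f2 /=.
rewrite !pr_Z_set1 pr_alpha0 pr_alpha1 px pNx.
rewrite !muln0 !mulr0n !muln1 subrr addNr -!mulr2n.
lra.
Qed.

Section half.
Variable H : set (borelType X).
Hypotheses (mH : measurable H) (H_anti : forall x, H x -> ~ H (- x))
  (H_cover : forall x, x != 0 -> H x \/ H (- x)).

Lemma pm_half : pm [set 0] + 2 * pm H = 1.
Proof.
have mNH := borel_measurableN mH.
have cover : [set 0] `|` H `|` -%R @^-1` H = setT.
  apply/seteqP; split => // x _.
  by have [->|/H_cover[]] := eqVneq x 0; [left; left | left; right | right].
have := prT mu; rewrite -cover !prU ?pm_oppr //; first lra.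
- by apply/seteqP; split => // x [-> H0]; apply: (H_anti H0); rewrite oppr0.
- exact: measurableU.
- apply/seteqP; split => // x [[-> | Hx] HNx]; last exact: H_anti Hx HNx.
  by move: HNx; rewrite /= oppr0 => H0; apply: (H_anti H0); rewrite oppr0.
Qed.

Lemma pr_sum_eq0_le_half (A : set (borelType X)) : measurable A -> A `<=` H ->
  pP E <= pm [set 0] ^+ 2 + 2 * pm A ^+ 2 + 2 * (pm H - pm A) ^+ 2.
Proof.
move=> mA AH; have mHA : measurable (H `\` A) by exact: measurableD.
have pHA : pm (H `\` A) = pm H - pm A.
  by rewrite -{2}(setDUK AH) prU ?setDIK // addrAC subrr add0r.
pose s := [:: [set 0]; A; -%R @^-1` A; H `\` A; -%R @^-1` (H `\` A)].
apply: le_trans (pr_sum_eq0_le (s := s) _ _) _.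
- move=> B; rewrite !inE => /or4P[| | |/orP[]] /eqP -> //; exact: borel_measurableN.
- rewrite !big_cons big_nil setU0; apply/seteqP; split => // x _.
  have [->|/H_cover[] Hx] := eqVneq x 0; first by left.
    by have [Ax | nAx] := pselect (A x); [right; left | do 3 right; left].
  by have [Ax | nAx] := pselect (A (- x)); [do 2 right; left | do 4 right].
- by rewrite !big_cons big_nil !pm_oppr // pHA; lra.
Qed.

Lemma two_point_of_identically_distributed : identically_distributed P Y1 Y2 ->
  exists x0 : borelType X, forall A : set (borelType X), measurable A ->
    pm A = 2^-1 * ((x0 \in A)%:R + (- x0 \in A)%:R).
Proof.
move=> idd; have law s : uniq s -> \sum_(x <- s) pm [set x] = 1 ->
    forall A, measurable A -> pm A = \sum_(x <- s) (x \in A)%:R * pm [set x].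
  move=> us s1 A mA.
  exact: (@pr_comp_finite_support _ _ _ mu _ id set1_measurable _ id).
have lb := pr_sum_eq0_ge idd.
have ub := pr_sum_eq0_le_half mH (@subset_refl _ H); rewrite subrr in ub.
have := pm_half; have := pr_ge0 mu [set 0]; have := pr_ge0 mu H => a0 p0 pH.
(* With [p = mu [set 0]] and [mu H = (1 - p) / 2] the two bounds read
   [1/2 + p/2 <= p^2 + (1 - p)^2 / 2], i.e. [p (p - 1) >= 0]. *)
have [p_eq0 | p_eq1] : pm [set 0] = 0 \/ pm [set 0] = 1.
  have : pm [set 0] * (pm [set 0] - 1) = 0 by nra.
  by move/eqP; rewrite mulf_eq0 subr_eq0 => /orP[]/eqP; [left | right].
- have pH_half : pm H = 2^-1 by lra.
  have H01 A : measurable A -> A `<=` H -> pm A = 0 \/ pm A = pm H.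
    move=> mA AH; have := pr_sum_eq0_le_half mA AH.
    have := pr_ge0 mu A; have := pr_le mu mA mH AH => AH_le A_ge0 ubA.
    have : pm A * (2 * pm A - 1) = 0 by nra.
    by move/eqP; rewrite mulf_eq0 => /orP[]/eqP; [left | right; lra].
  have H_gt0 : 0 < pm H by lra.
  have [x0 Hx0 x0_half] := pr_atom hX sX mH H_gt0 H01.
  have Nx0_half : pm [set - x0] = 2^-1.
    rewrite -pH_half -x0_half -(pm_oppr (set1_measurable x0)); congr pr.
    by apply/seteqP; split => y /=; [move=> -> | move=> <-]; rewrite opprK.
  have x0N : x0 != - x0 by apply/eqP => x0E; apply: (H_anti Hx0); rewrite -x0E.
  exists x0 => A mA.
  rewrite (law [:: x0; - x0]) ?big_cons ?big_nil ?x0_half ?pH_half ?Nx0_half //=;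
    [lra | by rewrite inE andbT | lra].
- exists 0 => A mA; rewrite (law [:: 0]) ?big_cons ?big_nil ?p_eq1 ?oppr0 //; lra.
Qed.

End half.

End bernoulli_sum.

Theorem theorem4p2 (R : realType) (X : topologicalZmodType)
  (d0 : measure_display) (Omega : measurableType d0) (P : probability Omega R)
  (xi1 xi2 : Omega -> borelType X) (alpha : Omega -> nat)
  (mu : probability (borelType X) R) :
  hausdorff_space X ->
  locally_compact [set: X] ->
  @second_countable X ->
  no_nonzero_compact_subgroup X ->
  measurable_fun setT xi1 -> measurable_fun setT xi2 ->
  measurable_fun setT alpha ->
  has_distribution P xi1 mu -> has_distribution P xi2 mu ->
  independent_rv P xi1 xi2 ->
  symmetric_measure mu ->
  P (alpha @^-1` [set 0%N]) = (2^-1)%:E ->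
  P (alpha @^-1` [set 1%N]) = (2^-1)%:E ->
  independent_rv P alpha (fun w => (xi1 w, xi2 w)) ->
  (identically_distributed P (fun w => xi1 w *+ (2 * alpha w)%N)
                             (fun w => xi1 w + xi2 w)
   <-> exists x0 : borelType X, forall A : set (borelType X), measurable A ->
         mu A = ((2^-1)%R%:E * (@dirac _ _ x0 R A + @dirac _ _ (- x0)%R R A))%E).
Proof.
move=> hX _ sX nc m1 m2 ma d1 d2 ind12 sym pa0 pa1 inda.
have [H [mH H_anti H_cover]] := borel_half_set hX nc sX.
split=> [idd | [x0 /pr_two_pointE muA]].
- have [x0 /pr_two_pointE muA] := two_point_of_identically_distributed hX sX
    m1 m2 ma d1 d2 ind12 sym pa0 pa1 inda mH H_anti H_cover idd.
  by exists x0.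
- exact: (identically_distributed_of_two_point hX sX nc m1 m2 ma d1 d2 ind12
    pa0 pa1 inda muA).
Qed.
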